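(* Let $U=[n,u,E,B]$, with $n(t,x)\in\mathbb{R}$ and $u,E,B(t,x)\in\mathbb{R}^3$, satisfy for all $t\geq0$, $x\in\mathbb{R}^3$ the linear system \begin{equation*} \partial_t n +\gamma \nabla\cdot u =0,\quad \partial_t u+\gamma \nabla n +\beta {E}-\mu\Delta u=0,\quad \partial_t {E} - \nabla \times {B} -\beta u = 0,\quad \partial_t {B} + \nabla \times {E} = 0,\quad \nabla \cdot{E} = -\frac{\beta}{\gamma}n, \ \ \nabla\cdot {B} =0. \end{equation*} Then there is a time-frequency functional $\mathcal{E}(\hat U(t,k))$ (a real-valued function of $k$ and of the value $\hat U(t,k)\in\mathbb{C}^{10}$) and a constant $c>0$ such that \begin{equation*} \mathcal{E}(\hat{U}(t,k))\sim |\hat{U}(t,k)|^2:=|\hat{n}(t,k)|^2+|\hat{u}(t,k)|^2+|\hat{E}(t,k)|^2+|\hat{B}(t,k)|^2 \end{equation*} and \begin{equation*} \partial_t \mathcal{E}(\hat{U}(t,k))+c|\hat{n}(t,k)|^2+c|k|^2 |\hat{u}(t,k)|^2 +c\frac{|k|^2}{(1+|k|^2)^2}|\hat{E}(t,k)|^2+c\frac{|k|^4}{(1+|k|^2)^3}|\hat{B}(t,k)|^2 \leq 0 \end{equation*} for all $t\geq 0$, $k\in \mathbb{R}^3$. In particular, \begin{equation*} \partial_t \mathcal{E}(\hat{U}(t,k))+c \frac{|k|^4}{(1+|k|^2)^3} \mathcal{E}(\hat{U}(t,k))\leq 0 \end{equation*} for all $t\geq 0$, $k\in \mathbb{R}^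3$.
   Context: $\gamma,\beta,\mu>0$ are constants. $\hat f(t,k)=\int_{\mathbb{R}^3}e^{-ik\cdot x}f(t,x)\,dx$ is the Fourier transform in $x$. $A\sim B$ means $cB\le A\le CB$ for constants $0<c\le C$ independent of $t,k$. *)

From Stdlib Require Import Reals.
From Coquelicot Require Import Coquelicot.

(* Real 3-vectors (frequencies k) and complex 3-vectors (Fourier values of u, E, B). *)
Record R3 := mkR3 { r1 : R; r2 : R; r3 : R }.
Record C3 := mkC3 { c1 : C; c2 : C; c3 : C }.

Open Scope C_scope.

Definition normR3sq (k : R3) : R :=
  (r1 k * r1 k + r2 k * r2 k + r3 k * r3 k)%R.

Definition normC3sq (v : C3) : R :=
  (Cmod (c1 v) ^ 2 + Cmod (c2 v) ^ 2 + Cmod (c3 v) ^ 2)%R.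

Definition normCsq (z : C) : R := (Cmod z ^ 2)%R.

(* k . v  (bilinear, no conjugation) for k real, v complex *)
Definition dotRC (k : R3) (v : C3) : C :=
  RtoC (r1 k) * c1 v + RtoC (r2 k) * c2 v + RtoC (r3 k) * c3 v.

Definition crossRC (k : R3) (v : C3) : C3 :=
  mkC3 (RtoC (r2 k) * c3 v - RtoC (r3 k) * c2 v)
       (RtoC (r3 k) * c1 v - RtoC (r1 k) * c3 v)
       (RtoC (r1 k) * c2 v - RtoC (r2 k) * c1 v).

Definition addC3 (v w : C3) : C3 := mkC3 (c1 v + c1 w) (c2 v + c2 w) (c3 v + c3 w).
Definition scalC3 (a : C) (v : C3) : C3 := mkC3 (a * c1 v) (a * c2 v) (a * c3 v).
Definition C3ofR3 (k : R3) : C3 := mkC3 (RtoC (r1 k)) (RtoC (r2 k)) (RtoC (r3 k)).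

Definition is_derive_C (f : R -> C) (t : R) (l : C) : Prop :=
  is_derive (fun s => Re (f s)) t (Re l) /\ is_derive (fun s => Im (f s)) t (Im l).

Definition is_derive_C3 (f : R -> C3) (t : R) (l : C3) : Prop :=
  is_derive_C (fun s => c1 (f s)) t (c1 l) /\
  is_derive_C (fun s => c2 (f s)) t (c2 l) /\
  is_derive_C (fun s => c3 (f s)) t (c3 l).

(* The Fourier transform (convention  f^(k) = \int e^{-i k.x} f(x) dx, so that
   d/dx_j  becomes  multiplication by  i k_j) of the linear system, at a fixed
   frequency k, for t >= 0:
     d/dt n + gamma i k.u = 0
     d/dt u + gamma i k n + beta E + mu |k|^2 u = 0
     d/dt E - i k x B - beta u = 0
     d/dt B + i k x E = 0
     i k.E = -(beta/gamma) n,   i k.B = 0. *)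
Definition fourier_solution (gamma beta mu : R) (k : R3)
  (n : R -> C) (u E B : R -> C3) : Prop :=
  forall t : R, (0 <= t)%R ->
    is_derive_C n t (- (RtoC gamma * Ci * dotRC k (u t))) /\
    is_derive_C3 u t
      (scalC3 (-1)
        (addC3 (scalC3 (RtoC gamma * Ci * n t) (C3ofR3 k))
          (addC3 (scalC3 (RtoC beta) (E t))
                 (scalC3 (RtoC (mu * normR3sq k)) (u t))))) /\
    is_derive_C3 E t
      (addC3 (scalC3 Ci (crossRC k (B t))) (scalC3 (RtoC beta) (u t))) /\
    is_derive_C3 B t (scalC3 (-1) (scalC3 Ci (crossRC k (E t)))) /\
    Ci * dotRC k (E t) = - (RtoC (beta / gamma) * n t) /\
    Ci * dotRC k (B t) = 0.

Definition normUsq (n : C) (u E B : C3) : R :=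
  (normCsq n + normC3sq u + normC3sq E + normC3sq B)%R.

Close Scope C_scope.

(* The functional is |U|^2/2 plus three small cross terms, weighted by powers of
   rho = 1/(1+|k|^2):  a1 rho Re<i n, k.u>,  a2 |k|^2 rho^2 <u, E>  and
   a3 |k|^2 rho^3 Re<i E, k x B>.  Along the system |U|^2/2 only dissipates
   mu |k|^2 |u|^2.  The first cross term yields dissipation of n, because the Gauss
   law ties k.E to n; the second yields dissipation of E; the third yields
   dissipation of k x B, whose norm is |k| |B| since B is divergence free.  All
   other contributions are absorbed by Young's inequality once a1 and a2 are small
   and a3 = 16 a2^2 / mu, and the same smallness makes the functional comparable
   to |U|^2.  Since |k|^4 rho^3 is dominated by each weight of the dissipation,
   the decay inequality follows. *)

From Pilot Require Import Defs.
From Stdlib Require Import Reals Lra Psatz.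
From Coquelicot Require Import Coquelicot.
(* Coquelicot's [c1] shadows the first field of [C3]. *)
Import Defs.
Open Scope R_scope.

(** * Real inequalities *)

Lemma discriminant_nonpos (a b c : R) :
  0 <= c -> (forall l, 0 <= a + 2 * b * l + c * l ^ 2) -> b ^ 2 <= a * c.
Proof.
  intros Hc H; destruct (Rle_lt_or_eq_dec 0 c Hc) as [Hc0 | <-].
  - specialize (H (- b / c)).
    replace (a + 2 * b * (- b / c) + c * (- b / c) ^ 2) with ((a * c - b ^ 2) / c) in H
      by (field; lra).
    assert (0 <= (a * c - b ^ 2) / c * c) by (apply Rmult_le_pos; lra).
    replace ((a * c - b ^ 2) / c * c) with (a * c - b ^ 2) in * by (field; lra). lra.
  - destruct (Req_dec b 0) as [-> | Hb]; [lra|].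
    specialize (H (- (a + 1) / (2 * b))).
    replace (a + 2 * b * (- (a + 1) / (2 * b)) + 0 * (- (a + 1) / (2 * b)) ^ 2) with (-1) in H
      by (field; lra). lra.
Qed.

Lemma young (T A B p q : R) :
  0 <= A -> 0 <= B -> 0 <= p -> 0 <= q -> T ^ 2 <= 4 * p * q * (A * B) ->
  T <= p * A + q * B.
Proof.
  intros HA HB Hp Hq HT.
  assert (Hsq : T ^ 2 <= (p * A + q * B) ^ 2).
  { pose proof (pow2_ge_0 (p * A - q * B)).
    replace ((p * A + q * B) ^ 2) with ((p * A - q * B) ^ 2 + 4 * p * q * (A * B)) by ring.
    lra. }
  destruct (Rle_or_lt T (p * A + q * B)) as [|Hlt]; [assumption|].
  assert (0 <= p * A + q * B) by (apply Rplus_le_le_0_compat; apply Rmult_le_pos; assumption).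
  nra.
Qed.

Lemma abs_le_half_sum (T A B : R) :
  0 <= A -> 0 <= B -> T ^ 2 <= A * B -> Rabs T <= (A + B) / 2.
Proof.
  intros HA HB HT.
  assert (H : forall T', T' ^ 2 <= A * B -> T' <= (A + B) / 2).
  { intros T' HT'; replace ((A + B) / 2) with (/ 2 * A + / 2 * B) by field.
    apply young; lra. }
  apply Rabs_le; split; [|apply H; lra].
  enough (- T <= (A + B) / 2) by lra. apply H; nra.
Qed.

Lemma Rmult_le_contract (x y z : R) : 0 <= x -> x <= 1 -> 0 <= y -> y <= z -> x * y <= z.
Proof. intros; apply Rle_trans with (1 * y); [apply Rmult_le_compat_r|]; lra. Qed.

Lemma Rabs_scale_le (a b x y : R) :
  0 <= a -> a <= b -> Rabs x <= y -> Rabs (a * x) <= b * y.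
Proof.
  intros Ha Hab Hx; rewrite Rabs_mult, (Rabs_pos_eq a Ha).
  apply Rmult_le_compat; [lra | apply Rabs_pos | lra | assumption].
Qed.

Lemma Rmult_le_of_le_div (a x y d : R) : 0 < x -> 0 < d -> a <= y / (d * x) -> a * x <= y / d.
Proof.
  intros Hx Hd Ha; apply Rmult_le_reg_r with (/ x); [apply Rinv_0_lt_compat; lra|].
  rewrite Rmult_assoc, Rinv_r, Rmult_1_r by lra.
  replace (y / d * / x) with (y / (d * x)) by (field; lra); exact Ha.
Qed.

Lemma Rdiv_le_of_le_mul (x y z : R) : 0 < y -> x <= z * y -> x / y <= z.
Proof.
  intros Hy Hx; apply Rmult_le_reg_r with y; [lra|].
  unfold Rdiv; rewrite Rmult_assoc, Rinv_l, Rmult_1_r by lra; exact Hx.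
Qed.

Ltac nonneg :=
  repeat first [ lra | apply pow2_ge_0 | apply Rmult_le_pos | apply pow_le
               | apply Rlt_le, Rinv_0_lt_compat ].

Ltac Rmin_le :=
  solve [ apply Rle_refl
        | eapply Rle_trans; [apply Rmin_l | Rmin_le]
        | eapply Rle_trans; [apply Rmin_r | Rmin_le] ].

(** * The real inner product on C and C^3 *)

Definition innerC (z w : C) : R := Re z * Re w + Im z * Im w.

Definition inner3 (v w : C3) : R :=
  innerC (c1 v) (c1 w) + innerC (c2 v) (c2 w) + innerC (c3 v) (c3 w).

Lemma normCsq_innerC (z : C) : normCsq z = innerC z z.
Proof.
  unfold normCsq, Cmod; rewrite pow2_sqrt; [unfold innerC, Re, Im; ring|].
  nra.
Qed.

Lemma normC3sq_inner3 (v : C3) : normC3sq v = inner3 v v.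
Proof.
  change (normCsq (c1 v) + normCsq (c2 v) + normCsq (c3 v) = inner3 v v).
  rewrite !normCsq_innerC; reflexivity.
Qed.

Ltac expand_coordinates :=
  unfold normUsq; rewrite ?normC3sq_inner3, ?normCsq_innerC;
  repeat match goal with
  | v : C3 |- _ => destruct v
  | z : C |- _ => destruct z
  end;
  cbv beta iota delta [normR3sq inner3 innerC dotRC crossRC addC3 scalC3 C3ofR3
    Cminus Copp Cplus Cmult RtoC Ci Re Im fst snd c1 c2 c3].

Lemma normR3sq_ge0 (k : R3) : 0 <= normR3sq k.
Proof. unfold normR3sq; nra. Qed.

Lemma normCsq_ge0 (z : C) : 0 <= normCsq z.
Proof. apply pow2_ge_0. Qed.

Lemma normC3sq_ge0 (v : C3) : 0 <= normC3sq v.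
Proof. unfold normC3sq; repeat apply Rplus_le_le_0_compat; apply pow2_ge_0. Qed.

Lemma innerC_cauchy_schwarz (z w : C) : innerC z w ^ 2 <= normCsq z * normCsq w.
Proof.
  rewrite !normCsq_innerC; apply discriminant_nonpos.
  - rewrite <- normCsq_innerC; apply normCsq_ge0.
  - intros l. replace (innerC z z + 2 * innerC z w * l + innerC w w * l ^ 2)
      with (innerC (z + RtoC l * w) (z + RtoC l * w)) by (expand_coordinates; ring).
    rewrite <- normCsq_innerC; apply normCsq_ge0.
Qed.

Lemma inner3_cauchy_schwarz (v w : C3) : inner3 v w ^ 2 <= normC3sq v * normC3sq w.
Proof.
  rewrite !normC3sq_inner3; apply discriminant_nonpos.
  - rewrite <- normC3sq_inner3; apply normC3sq_ge0.
  - intros l. replace (inner3 v v + 2 * inner3 v w * l + inner3 w w * l ^ 2)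
      with (inner3 (addC3 v (scalC3 l w)) (addC3 v (scalC3 l w))) by (expand_coordinates; ring).
    rewrite <- normC3sq_inner3; apply normC3sq_ge0.
Qed.

Lemma normCsq_Ci_mul (z : C) : normCsq (Ci * z) = normCsq z.
Proof. expand_coordinates; ring. Qed.

Lemma normC3sq_scalC3_Ci (v : C3) : normC3sq (scalC3 Ci v) = normC3sq v.
Proof. expand_coordinates; ring. Qed.

Lemma innerC_Ci_cauchy_schwarz (z w : C) : innerC (Ci * z) w ^ 2 <= normCsq z * normCsq w.
Proof. rewrite <- (normCsq_Ci_mul z); apply innerC_cauchy_schwarz. Qed.

Lemma inner3_Ci_cauchy_schwarz_l (v w : C3) :
  inner3 (scalC3 Ci v) w ^ 2 <= normC3sq v * normC3sq w.
Proof. rewrite <- (normC3sq_scalC3_Ci v); apply inner3_cauchy_schwarz. Qed.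

Lemma inner3_Ci_cauchy_schwarz_r (v w : C3) :
  inner3 v (scalC3 Ci w) ^ 2 <= normC3sq v * normC3sq w.
Proof. rewrite <- (normC3sq_scalC3_Ci w); apply inner3_cauchy_schwarz. Qed.

Lemma lagrange_identity (k : R3) (v : C3) :
  normC3sq (crossRC k v) + normCsq (dotRC k v) = normR3sq k * normC3sq v.
Proof. expand_coordinates; ring. Qed.

Lemma normCsq_dotRC_le (k : R3) (v : C3) : normCsq (dotRC k v) <= normR3sq k * normC3sq v.
Proof. rewrite <- lagrange_identity; pose proof (normC3sq_ge0 (crossRC k v)); lra. Qed.

Lemma normC3sq_crossRC_le (k : R3) (v : C3) :
  normC3sq (crossRC k v) <= normR3sq k * normC3sq v.
Proof. rewrite <- lagrange_identity; pose proof (normCsq_ge0 (dotRC k v)); lra. Qed.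

Lemma Ci_mul_eq0 (z : C) : (Ci * z)%C = 0%C -> z = 0%C.
Proof.
  destruct z as [x y]; unfold Cmult, Ci, RtoC; simpl; intros H; injection H as H1 H2.
  f_equal; lra.
Qed.

Lemma normC3sq_crossRC_solenoidal (k : R3) (v : C3) :
  (Ci * dotRC k v)%C = 0%C -> normC3sq (crossRC k v) = normR3sq k * normC3sq v.
Proof.
  intros H; rewrite <- lagrange_identity, (Ci_mul_eq0 _ H).
  unfold normCsq; rewrite Cmod_0; ring.
Qed.

Lemma innerC_Ci_mul_of_Ci_mul_eq (r : R) (z w : C) :
  (Ci * w)%C = (- (RtoC r * z))%C -> innerC (Ci * z) w = r * normCsq z.
Proof.
  destruct z as [x y], w as [p q]; unfold Cmult, Copp, RtoC, Ci; simpl; intros H.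
  injection H as H1 H2.
  replace p with (- (r * y)) by lra; replace q with (r * x) by lra.
  expand_coordinates; ring.
Qed.

(** * Differentiation of complex-valued functions of time *)

Lemma is_derive_Rplus (f g : R -> R) (t df dg : R) :
  is_derive f t df -> is_derive g t dg -> is_derive (fun s => f s + g s) t (df + dg).
Proof. intros Hf Hg; apply (is_derive_plus f g); assumption. Qed.

Lemma is_derive_Rminus (f g : R -> R) (t df dg : R) :
  is_derive f t df -> is_derive g t dg -> is_derive (fun s => f s - g s) t (df - dg).
Proof. intros Hf Hg; apply (is_derive_minus f g); assumption. Qed.

Lemma is_derive_lincomb (f g : R -> R) (t a b df dg : R) :
  is_derive f t df -> is_derive g t dg ->
  is_derive (fun s => a * f s + b * g s) t (a * df + b * dg).
Proof. intros Hf Hg; apply is_derive_Rplus; apply is_derive_scal; assumption. Qed.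

Lemma is_derive_C_plus (f g : R -> C) (t : R) (df dg : C) :
  is_derive_C f t df -> is_derive_C g t dg ->
  is_derive_C (fun s => (f s + g s)%C) t (df + dg)%C.
Proof. intros [Hf1 Hf2] [Hg1 Hg2]; split; apply is_derive_Rplus; assumption. Qed.

Lemma is_derive_C_minus (f g : R -> C) (t : R) (df dg : C) :
  is_derive_C f t df -> is_derive_C g t dg ->
  is_derive_C (fun s => (f s - g s)%C) t (df - dg)%C.
Proof. intros [Hf1 Hf2] [Hg1 Hg2]; split; apply is_derive_Rminus; assumption. Qed.

Lemma is_derive_C_scal (a : C) (f : R -> C) (t : R) (df : C) :
  is_derive_C f t df -> is_derive_C (fun s => (a * f s)%C) t (a * df)%C.
Proof.
  intros [Hf1 Hf2]; split.
  - apply (is_derive_ext (fun s => Re a * Re (f s) + - Im a * Im (f s)));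
      [intros s; unfold Re, Im; simpl; ring|].
    replace (Re (a * df)%C) with (Re a * Re df + - Im a * Im df) by (unfold Re, Im; simpl; ring).
    apply is_derive_lincomb; assumption.
  - apply (is_derive_ext (fun s => Re a * Im (f s) + Im a * Re (f s)));
      [intros s; unfold Re, Im; simpl; ring|].
    replace (Im (a * df)%C) with (Re a * Im df + Im a * Re df) by (unfold Re, Im; simpl; ring).
    apply is_derive_lincomb; assumption.
Qed.

Lemma is_derive_innerC (f g : R -> C) (t : R) (df dg : C) :
  is_derive_C f t df -> is_derive_C g t dg ->
  is_derive (fun s => innerC (f s) (g s)) t (innerC df (g t) + innerC (f t) dg).
Proof.
  intros [Hf1 Hf2] [Hg1 Hg2]; unfold innerC.
  replace (Re df * Re (g t) + Im df * Im (g t) + (Re (f t) * Re dg + Im (f t) * Im dg))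
    with ((Re df * Re (g t) + Re (f t) * Re dg) + (Im df * Im (g t) + Im (f t) * Im dg)) by ring.
  apply is_derive_Rplus; apply Derive.is_derive_mult; assumption.
Qed.

Lemma is_derive_inner3 (f g : R -> C3) (t : R) (df dg : C3) :
  is_derive_C3 f t df -> is_derive_C3 g t dg ->
  is_derive (fun s => inner3 (f s) (g s)) t (inner3 df (g t) + inner3 (f t) dg).
Proof.
  intros (Hf1 & Hf2 & Hf3) (Hg1 & Hg2 & Hg3); unfold inner3.
  replace (_ + _) with
    ((innerC (c1 df) (c1 (g t)) + innerC (c1 (f t)) (c1 dg))
     + (innerC (c2 df) (c2 (g t)) + innerC (c2 (f t)) (c2 dg))
     + (innerC (c3 df) (c3 (g t)) + innerC (c3 (f t)) (c3 dg))) by ring.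
  apply is_derive_Rplus; [apply is_derive_Rplus|]; apply is_derive_innerC; assumption.
Qed.

Lemma is_derive_C_dotRC (k : R3) (f : R -> C3) (t : R) (df : C3) :
  is_derive_C3 f t df -> is_derive_C (fun s => dotRC k (f s)) t (dotRC k df).
Proof.
  intros (H1 & H2 & H3); unfold dotRC.
  apply is_derive_C_plus; [apply is_derive_C_plus|]; apply is_derive_C_scal; assumption.
Qed.

Lemma is_derive_C3_crossRC (k : R3) (f : R -> C3) (t : R) (df : C3) :
  is_derive_C3 f t df -> is_derive_C3 (fun s => crossRC k (f s)) t (crossRC k df).
Proof.
  intros (H1 & H2 & H3); split; [|split]; simpl;
    apply is_derive_C_minus; apply is_derive_C_scal; assumption.
Qed.

Lemma is_derive_C3_scalC3 (a : C) (f : R -> C3) (t : R) (df : C3) :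
  is_derive_C3 f t df -> is_derive_C3 (fun s => scalC3 a (f s)) t (scalC3 a df).
Proof. intros (H1 & H2 & H3); split; [|split]; apply is_derive_C_scal; assumption. Qed.

(** * The Fourier-transformed system at a fixed frequency *)

Section LinearSystem.

Variables gamma beta mu : R.
Variable k : R3.

Local Open Scope C_scope.

(* The time derivatives prescribed by [fourier_solution]. *)

Definition n_rate (u : C3) : C := - (RtoC gamma * Ci * dotRC k u).

Definition u_rate (n : C) (u E : C3) : C3 :=
  scalC3 (-1)
    (addC3 (scalC3 (RtoC gamma * Ci * n) (C3ofR3 k))
       (addC3 (scalC3 (RtoC beta) E) (scalC3 (RtoC (mu * normR3sq k)) u))).

Definition E_rate (u B : C3) : C3 := addC3 (scalC3 Ci (crossRC k B)) (scalC3 (RtoC beta) u).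

Definition B_rate (E : C3) : C3 := scalC3 (-1) (scalC3 Ci (crossRC k E)).

Local Close Scope C_scope.

Definition energy (w1 w2 w3 : R) (n : C) (u E B : C3) : R :=
  / 2 * normUsq n u E B + w1 * innerC (Ci * n) (dotRC k u) + w2 * inner3 u E
  + w3 * inner3 (scalC3 Ci E) (crossRC k B).

Definition energy_polar (w1 w2 w3 : R) (n : C) (u E B : C3) (n' : C) (u' E' B' : C3) : R :=
  innerC n n' + inner3 u u' + inner3 E E' + inner3 B B'
  + w1 * (innerC (Ci * n') (dotRC k u) + innerC (Ci * n) (dotRC k u'))
  + w2 * (inner3 u' E + inner3 u E')
  + w3 * (inner3 (scalC3 Ci E') (crossRC k B) + inner3 (scalC3 Ci E) (crossRC k B')).

Lemma is_derive_energy (w1 w2 w3 : R) (n : R -> C) (u E B : R -> C3) (t : R)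
    (n' : C) (u' E' B' : C3) :
  is_derive_C n t n' -> is_derive_C3 u t u' -> is_derive_C3 E t E' -> is_derive_C3 B t B' ->
  is_derive (fun s => energy w1 w2 w3 (n s) (u s) (E s) (B s)) t
    (energy_polar w1 w2 w3 (n t) (u t) (E t) (B t) n' u' E' B').
Proof.
  intros Hn Hu HE HB.
  apply (is_derive_ext (fun s =>
    / 2 * (innerC (n s) (n s) + inner3 (u s) (u s) + inner3 (E s) (E s) + inner3 (B s) (B s))
    + w1 * innerC (Ci * n s) (dotRC k (u s)) + w2 * inner3 (u s) (E s)
    + w3 * inner3 (scalC3 Ci (E s)) (crossRC k (B s)))).
  { intros s; unfold energy, normUsq; rewrite normCsq_innerC, !normC3sq_inner3; reflexivity. }
  replace (energy_polar w1 w2 w3 (n t) (u t) (E t) (B t) n' u' E' B') with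
    (/ 2 * ((innerC n' (n t) + innerC (n t) n') + (inner3 u' (u t) + inner3 (u t) u')
            + (inner3 E' (E t) + inner3 (E t) E') + (inner3 B' (B t) + inner3 (B t) B'))
     + w1 * (innerC (Ci * n') (dotRC k (u t)) + innerC (Ci * n t) (dotRC k u'))
     + w2 * (inner3 u' (E t) + inner3 (u t) E')
     + w3 * (inner3 (scalC3 Ci E') (crossRC k (B t)) + inner3 (scalC3 Ci (E t)) (crossRC k B')))
    by (unfold energy_polar, inner3, innerC; field).
  apply is_derive_Rplus; [apply is_derive_Rplus; [apply is_derive_Rplus|]|];
    apply is_derive_scal.
  - apply is_derive_Rplus; [apply is_derive_Rplus; [apply is_derive_Rplus|]|].
    + apply is_derive_innerC; assumption.
    + apply is_derive_inner3; assumption.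
    + apply is_derive_inner3; assumption.
    + apply is_derive_inner3; assumption.
  - apply is_derive_innerC; [apply is_derive_C_scal | apply is_derive_C_dotRC]; assumption.
  - apply is_derive_inner3; assumption.
  - apply is_derive_inner3; [apply is_derive_C3_scalC3 | apply is_derive_C3_crossRC]; assumption.
Qed.

Lemma norm_rate_identity (n : C) (u E B : C3) :
  innerC n (n_rate u) + inner3 u (u_rate n u E) + inner3 E (E_rate u B) + inner3 B (B_rate E)
  = - (mu * normR3sq k) * normC3sq u.
Proof. unfold n_rate, u_rate, E_rate, B_rate; expand_coordinates; ring. Qed.

Lemma nu_cross_rate_identity (n : C) (u E : C3) :
  gamma <> 0 -> (Ci * dotRC k E)%C = (- (RtoC (beta / gamma) * n))%C ->
  innerC (Ci * n_rate u) (dotRC k u) + innerC (Ci * n) (dotRC k (u_rate n u E))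
  = - (gamma * normR3sq k + beta ^ 2 / gamma) * normCsq n + gamma * normCsq (dotRC k u)
    - mu * normR3sq k * innerC (Ci * n) (dotRC k u).
Proof.
  intros Hg Hgauss.
  transitivity (- gamma * normR3sq k * normCsq n + gamma * normCsq (dotRC k u)
                - beta * innerC (Ci * n) (dotRC k E)
                - mu * normR3sq k * innerC (Ci * n) (dotRC k u)).
  - unfold n_rate, u_rate; clear Hgauss; expand_coordinates; ring.
  - rewrite (innerC_Ci_mul_of_Ci_mul_eq _ _ _ Hgauss); field; assumption.
Qed.

Lemma uE_cross_rate_identity (n : C) (u E B : C3) :
  gamma <> 0 -> (Ci * dotRC k E)%C = (- (RtoC (beta / gamma) * n))%C ->
  inner3 (u_rate n u E) E + inner3 u (E_rate u B)
  = - beta * normC3sq E - beta * normCsq n + beta * normC3sq u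
    - mu * normR3sq k * inner3 u E + inner3 u (scalC3 Ci (crossRC k B)).
Proof.
  intros Hg Hgauss.
  transitivity (- gamma * innerC (Ci * n) (dotRC k E) - beta * normC3sq E + beta * normC3sq u
                - mu * normR3sq k * inner3 u E + inner3 u (scalC3 Ci (crossRC k B))).
  - unfold u_rate, E_rate; clear Hgauss; expand_coordinates; ring.
  - rewrite (innerC_Ci_mul_of_Ci_mul_eq _ _ _ Hgauss); field; assumption.
Qed.

Lemma EB_cross_rate_identity (u E B : C3) :
  inner3 (scalC3 Ci (E_rate u B)) (crossRC k B) + inner3 (scalC3 Ci E) (crossRC k (B_rate E))
  = - normC3sq (crossRC k B) + normC3sq (crossRC k E)
    - beta * inner3 u (scalC3 Ci (crossRC k B)).
Proof. unfold E_rate, B_rate; expand_coordinates; ring. Qed.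

Lemma energy_polar_rates (w1 w2 w3 : R) (n : C) (u E B : C3) :
  gamma <> 0 -> (Ci * dotRC k E)%C = (- (RtoC (beta / gamma) * n))%C ->
  energy_polar w1 w2 w3 n u E B (n_rate u) (u_rate n u E) (E_rate u B) (B_rate E)
  = - (mu * normR3sq k) * normC3sq u
    + w1 * (- (gamma * normR3sq k + beta ^ 2 / gamma) * normCsq n
            + gamma * normCsq (dotRC k u) - mu * normR3sq k * innerC (Ci * n) (dotRC k u))
    + w2 * (- beta * normC3sq E - beta * normCsq n + beta * normC3sq u
            - mu * normR3sq k * inner3 u E + inner3 u (scalC3 Ci (crossRC k B)))
    + w3 * (- normC3sq (crossRC k B) + normC3sq (crossRC k E)
            - beta * inner3 u (scalC3 Ci (crossRC k B))).
Proof.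
  intros Hg Hgauss; unfold energy_polar.
  rewrite norm_rate_identity, nu_cross_rate_identity, uE_cross_rate_identity,
    EB_cross_rate_identity by assumption.
  reflexivity.
Qed.

End LinearSystem.

(** * Energy estimates *)

Section EnergyInequalities.

Variables gamma beta mu a1 a2 a3 m0 c : R.
Hypothesis Hgamma : 0 < gamma.
Hypothesis Hbeta : 0 < beta.
Hypothesis Hmu : 0 < mu.
(* [m0] bounds (gamma K + beta^2 / gamma) / (1 + K) from below for all K >= 0. *)
Hypothesis Hm0 : 0 <= m0.
Hypothesis Hm0_gamma : m0 <= gamma.
Hypothesis Hm0_beta : m0 <= beta ^ 2 / gamma.
Hypothesis Ha1 : 0 <= a1.
Hypothesis Ha1_gamma : a1 * gamma <= mu / 16.
Hypothesis Ha1_mu : a1 * mu <= m0 / 16.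
Hypothesis Ha1_small : a1 <= / 8.
Hypothesis Ha2 : 0 <= a2.
Hypothesis Ha2_beta : a2 * beta <= mu / 16.
Hypothesis Ha2_mu : a2 * mu <= beta / 16.
Hypothesis Ha2_small : a2 <= / 8.
Hypothesis Ha3 : 0 <= a3.
Hypothesis Ha2_a3 : a2 ^ 2 <= a3 * mu / 16.
Hypothesis Ha3_a2 : a3 <= a2 * beta / 4.
Hypothesis Ha3_beta : a3 * beta ^ 2 <= mu / 16.
Hypothesis Ha3_small : a3 <= / 8.
Hypothesis Hc : 0 <= c.
Hypothesis Hc_mu : c <= mu / 2.
Hypothesis Hc_a1 : c <= a1 * m0 / 2.
Hypothesis Hc_a2 : c <= a2 * beta / 2.
Hypothesis Hc_a3 : c <= a3 / 2.

Section Scalar.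

(* [K], [rho] stand for |k|^2 and 1 / (1 + |k|^2), and [N], [U], [EE], [BB], [ku2],
   [P], [Q], [Y], [S], [kB2], [kE2] for |n|^2, |u|^2, |E|^2, |B|^2, |k.u|^2,
   Re<i n, k.u>, <u, E>, Re<u, i k x B>, Re<i E, k x B>, |k x B|^2, |k x E|^2. *)

Variables K rho : R.
Hypothesis HK : 0 <= K.
Hypothesis Hrho : rho * (1 + K) = 1.

Lemma rho_pos : 0 < rho.
Proof. nra. Qed.

Lemma rho_le_1 : rho <= 1.
Proof. nra. Qed.

Lemma K_rho_le_1 : K * rho <= 1.
Proof. nra. Qed.

Variables N U EE BB ku2 P Q Y S kB2 kE2 : R.
Hypothesis HN : 0 <= N.
Hypothesis HU : 0 <= U.
Hypothesis HEE : 0 <= EE.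
Hypothesis HBB : 0 <= BB.
Hypothesis Hku2 : 0 <= ku2.
Hypothesis Hku2_le : ku2 <= K * U.
Hypothesis HP : P ^ 2 <= N * ku2.
Hypothesis HQ : Q ^ 2 <= U * EE.
Hypothesis HY : Y ^ 2 <= U * kB2.
Hypothesis HS : S ^ 2 <= EE * kB2.
Hypothesis HkB2 : kB2 = K * BB.
Hypothesis HkE2 : kE2 <= K * EE.

Lemma rate_nu_bound :
  a1 * rho * (- (gamma * K + beta ^ 2 / gamma) * N + gamma * ku2 - mu * K * P)
  <= - (3 / 4) * (a1 * m0) * N + mu / 8 * (K * U).
Proof.
  pose proof rho_pos; pose proof rho_le_1; pose proof K_rho_le_1.
  assert (Hku : a1 * rho * (gamma * ku2) <= mu / 16 * (K * U)).
  { assert (rho * ku2 <= K * U).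
    { apply Rmult_le_contract; lra. }
    replace (a1 * rho * (gamma * ku2)) with ((a1 * gamma) * (rho * ku2)) by ring.
    apply Rmult_le_compat; nra. }
  assert (HPb : a1 * rho * (- (mu * K * P)) <= a1 * m0 / 4 * N + mu / 16 * (K * U)).
  { apply young; [nonneg | nonneg | nonneg | nonneg |].
    assert (HKP : (rho * K) ^ 2 * P ^ 2 <= N * (K * U)).
    { assert (N * ku2 <= N * (K * U)) by (apply Rmult_le_compat_l; lra).
      replace ((rho * K) ^ 2 * P ^ 2) with (rho * K * (rho * K * P ^ 2)) by ring.
      assert (0 <= rho * K) by nra.
      apply Rmult_le_contract; [lra | lra | nra |].
      apply Rmult_le_contract; [lra | lra | nra | lra]. }
    replace ((a1 * rho * - (mu * K * P)) ^ 2)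
      with ((a1 * mu) * (a1 * mu) * ((rho * K) ^ 2 * P ^ 2)) by ring.
    replace (4 * (a1 * m0 / 4) * (mu / 16) * (N * (K * U)))
      with ((a1 * mu) * (m0 / 16) * (N * (K * U))) by field.
    assert (0 <= a1 * mu) by nra.
    apply Rmult_le_compat; [nra | nra | apply Rmult_le_compat_l; lra | lra]. }
  assert (HNb : a1 * m0 * N <= a1 * rho * ((gamma * K + beta ^ 2 / gamma) * N)).
  { assert (m0 <= rho * (gamma * K + beta ^ 2 / gamma)) by nra.
    replace (a1 * rho * ((gamma * K + beta ^ 2 / gamma) * N))
      with (a1 * N * (rho * (gamma * K + beta ^ 2 / gamma))) by ring.
    replace (a1 * m0 * N) with (a1 * N * m0) by ring.
    apply Rmult_le_compat_l; nra. }
  nra.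
Qed.

Lemma K2_rho3_Y_sq_bound : K ^ 2 * rho ^ 3 * Y ^ 2 <= K ^ 2 * rho ^ 3 * BB * (K * U).
Proof.
  pose proof rho_pos.
  replace (K ^ 2 * rho ^ 3 * BB * (K * U)) with (K ^ 2 * rho ^ 3 * (U * kB2)) by (rewrite HkB2; ring).
  apply Rmult_le_compat_l; [|assumption].
  apply Rmult_le_pos; [apply pow2_ge_0 | apply pow_le; lra].
Qed.

Lemma rate_uE_bound :
  a2 * (K * rho ^ 2) * (- beta * EE - beta * N + beta * U - mu * K * Q + Y)
  <= - (3 / 4) * (a2 * beta) * (K * rho ^ 2 * EE) + a3 / 4 * (K ^ 2 * rho ^ 3 * BB)
     + 3 * mu / 16 * (K * U).
Proof.
  pose proof rho_pos; pose proof rho_le_1; pose proof K_rho_le_1.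
  assert (Hw : 0 <= K * rho ^ 2 <= 1) by (split; nra).
  assert (HwK : 0 <= K * rho ^ 2 * K <= 1) by (split; nra).
  assert (HKU : 0 <= K * U) by nra.
  assert (HUb : a2 * (K * rho ^ 2) * (beta * U) <= mu / 16 * (K * U)).
  { replace (a2 * (K * rho ^ 2) * (beta * U)) with ((a2 * beta) * (rho ^ 2 * (K * U))) by ring.
    apply Rmult_le_compat; try nra. apply Rmult_le_contract; nra. }
  assert (HQb : a2 * (K * rho ^ 2) * (- (mu * K * Q))
                <= a2 * beta / 4 * (K * rho ^ 2 * EE) + mu / 16 * (K * U)).
  { apply young; [nonneg | nonneg | nonneg | nonneg |].
    replace ((a2 * (K * rho ^ 2) * - (mu * K * Q)) ^ 2)
      with ((a2 * mu) * (a2 * mu) * ((K * rho ^ 2 * K) * ((K * rho ^ 2 * K) * Q ^ 2))) by ring.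
    replace (4 * (a2 * beta / 4) * (mu / 16) * (K * rho ^ 2 * EE * (K * U)))
      with ((a2 * mu) * (beta / 16) * ((K * rho ^ 2 * K) * (U * EE))) by field.
    assert (0 <= a2 * mu) by nra.
    apply Rmult_le_compat; [nra | nra | apply Rmult_le_compat_l; lra |].
    apply Rmult_le_compat_l; [lra|]. apply Rmult_le_contract; nra. }
  assert (HYb : a2 * (K * rho ^ 2) * Y <= a3 / 4 * (K ^ 2 * rho ^ 3 * BB) + mu / 16 * (K * U)).
  { apply young; [nonneg | nonneg | nonneg | nonneg |].
    pose proof K2_rho3_Y_sq_bound.
    replace ((a2 * (K * rho ^ 2) * Y) ^ 2) with (a2 ^ 2 * (rho * (K ^ 2 * rho ^ 3 * Y ^ 2))) by ring.
    replace (4 * (a3 / 4) * (mu / 16) * (K ^ 2 * rho ^ 3 * BB * (K * U)))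
      with (a3 * mu / 16 * (K ^ 2 * rho ^ 3 * BB * (K * U))) by field.
    apply Rmult_le_compat; [nonneg | nonneg | lra |].
    apply Rmult_le_contract; [lra | lra | nonneg | assumption]. }
  assert (0 <= a2 * (K * rho ^ 2) * (beta * N)) by nonneg.
  lra.
Qed.

Lemma rate_EB_bound :
  a3 * (K * rho ^ 3) * (- kB2 + kE2 - beta * Y)
  <= - (3 / 4) * a3 * (K ^ 2 * rho ^ 3 * BB) + a2 * beta / 4 * (K * rho ^ 2 * EE)
     + mu / 16 * (K * U).
Proof.
  pose proof rho_pos; pose proof rho_le_1; pose proof K_rho_le_1.
  assert (HEb : a3 * (K * rho ^ 3) * kE2 <= a2 * beta / 4 * (K * rho ^ 2 * EE)).
  { apply Rle_trans with (a3 * (K * rho ^ 2 * EE)).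
    - replace (a3 * (K * rho ^ 2 * EE)) with (a3 * (K * rho ^ 3) * (EE / rho)) by (field; lra).
      apply Rmult_le_compat_l; [nonneg|].
      apply Rle_trans with (K * EE); [assumption|].
      replace (K * EE) with (K * rho * (EE / rho)) by (field; lra).
      apply Rmult_le_contract; [nonneg | lra | nonneg | lra].
    - apply Rmult_le_compat_r; [nonneg | lra]. }
  assert (HYb : a3 * (K * rho ^ 3) * (- (beta * Y))
                <= a3 / 4 * (K ^ 2 * rho ^ 3 * BB) + mu / 16 * (K * U)).
  { apply young; [nonneg | nonneg | nonneg | nonneg |].
    pose proof K2_rho3_Y_sq_bound.
    replace ((a3 * (K * rho ^ 3) * - (beta * Y)) ^ 2)
      with (a3 * (a3 * beta ^ 2) * (rho ^ 3 * (K ^ 2 * rho ^ 3 * Y ^ 2))) by ring.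
    replace (4 * (a3 / 4) * (mu / 16) * (K ^ 2 * rho ^ 3 * BB * (K * U)))
      with (a3 * (mu / 16) * (K ^ 2 * rho ^ 3 * BB * (K * U))) by field.
    apply Rmult_le_compat; [nonneg | nonneg | apply Rmult_le_compat_l; lra |].
    apply Rmult_le_contract; [nonneg | | nonneg | assumption].
    replace 1 with (1 ^ 3) by ring. apply pow_incr; lra. }
  rewrite HkB2 in *. lra.
Qed.

Lemma rho_P_bound : Rabs (rho * P) <= (N + U) / 2.
Proof.
  pose proof rho_pos; pose proof rho_le_1; pose proof K_rho_le_1.
  apply abs_le_half_sum; [lra | lra |].
  apply Rle_trans with (rho * (K * rho) * (N * U)).
  - replace ((rho * P) ^ 2) with (rho ^ 2 * P ^ 2) by ring.
    replace (rho * (K * rho) * (N * U)) with (rho ^ 2 * (N * (K * U))) by ring.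
    apply Rmult_le_compat_l; [nonneg|].
    apply Rle_trans with (N * ku2); [assumption | apply Rmult_le_compat_l; lra].
  - apply Rmult_le_contract; [nonneg | | nonneg | lra].
    apply Rmult_le_contract; [lra | lra | nonneg | lra].
Qed.

Lemma K_rho2_Q_bound : Rabs (K * rho ^ 2 * Q) <= (U + EE) / 2.
Proof.
  pose proof rho_pos; pose proof rho_le_1; pose proof K_rho_le_1.
  apply abs_le_half_sum; [lra | lra |].
  replace ((K * rho ^ 2 * Q) ^ 2) with ((K * rho * rho) * ((K * rho * rho) * Q ^ 2)) by ring.
  assert (0 <= K * rho * rho <= 1).
  { split; [nonneg|]. apply Rmult_le_contract; [nonneg | lra | lra | lra]. }
  apply Rmult_le_contract; [lra | lra | nonneg |].
  apply Rmult_le_contract; [lra | lra | nonneg | lra].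
Qed.

Lemma K_rho3_S_bound : Rabs (K * rho ^ 3 * S) <= (EE + BB) / 2.
Proof.
  pose proof rho_pos; pose proof rho_le_1; pose proof K_rho_le_1.
  apply abs_le_half_sum; [lra | lra |].
  apply Rle_trans with ((K * rho) ^ 3 * rho ^ 3 * (EE * BB)).
  - replace ((K * rho ^ 3 * S) ^ 2) with (K ^ 2 * rho ^ 6 * S ^ 2) by ring.
    replace ((K * rho) ^ 3 * rho ^ 3 * (EE * BB)) with (K ^ 2 * rho ^ 6 * (EE * kB2))
      by (rewrite HkB2; ring).
    apply Rmult_le_compat_l; [nonneg | assumption].
  - apply Rmult_le_contract; [nonneg | | nonneg | lra].
    replace 1 with (1 ^ 3 * 1 ^ 3) by ring.
    apply Rmult_le_compat; [nonneg | nonneg | apply pow_incr | apply pow_incr]; nonneg.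
Qed.

Lemma cross_term_bound :
  Rabs (a1 * rho * P + a2 * (K * rho ^ 2) * Q + a3 * (K * rho ^ 3) * S)
  <= (N + U + EE + BB) / 8.
Proof.
  pose proof (Rabs_scale_le a1 (/ 8) _ _ Ha1 Ha1_small rho_P_bound).
  pose proof (Rabs_scale_le a2 (/ 8) _ _ Ha2 Ha2_small K_rho2_Q_bound).
  pose proof (Rabs_scale_le a3 (/ 8) _ _ Ha3 Ha3_small K_rho3_S_bound).
  pose proof (Rabs_triang (a1 * rho * P + a2 * (K * rho ^ 2) * Q) (a3 * (K * rho ^ 3) * S)).
  pose proof (Rabs_triang (a1 * rho * P) (a2 * (K * rho ^ 2) * Q)).
  rewrite !Rmult_assoc in *. lra.
Qed.

Lemma scalar_energy_bounds :
  / 4 * (N + U + EE + BB)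
  <= / 2 * (N + U + EE + BB) + a1 * rho * P + a2 * (K * rho ^ 2) * Q + a3 * (K * rho ^ 3) * S
  <= N + U + EE + BB.
Proof.
  pose proof cross_term_bound as H.
  pose proof (Rle_abs (a1 * rho * P + a2 * (K * rho ^ 2) * Q + a3 * (K * rho ^ 3) * S)).
  pose proof (Rle_abs (- (a1 * rho * P + a2 * (K * rho ^ 2) * Q + a3 * (K * rho ^ 3) * S))).
  rewrite Rabs_Ropp in *. lra.
Qed.

Lemma scalar_dissipation :
  - (mu * K * U)
  + a1 * rho * (- (gamma * K + beta ^ 2 / gamma) * N + gamma * ku2 - mu * K * P)
  + a2 * (K * rho ^ 2) * (- beta * EE - beta * N + beta * U - mu * K * Q + Y)
  + a3 * (K * rho ^ 3) * (- kB2 + kE2 - beta * Y)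
  + c * N + c * K * U + c * (K * rho ^ 2) * EE + c * (K ^ 2 * rho ^ 3) * BB <= 0.
Proof.
  pose proof rate_nu_bound; pose proof rate_uE_bound; pose proof rate_EB_bound.
  pose proof rho_pos.
  assert (c * N <= a1 * m0 / 2 * N) by (apply Rmult_le_compat_r; lra).
  assert (c * (K * U) <= mu / 2 * (K * U)) by (apply Rmult_le_compat_r; nonneg).
  assert (c * (K * rho ^ 2 * EE) <= a2 * beta / 2 * (K * rho ^ 2 * EE))
    by (apply Rmult_le_compat_r; nonneg).
  assert (c * (K ^ 2 * rho ^ 3 * BB) <= a3 / 2 * (K ^ 2 * rho ^ 3 * BB))
    by (apply Rmult_le_compat_r; nonneg).
  assert (0 <= a1 * m0 * N) by nonneg.
  assert (0 <= mu * (K * U)) by nonneg.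
  lra.
Qed.

Lemma decay_weight_le :
  K ^ 2 * rho ^ 3 <= 1 /\ K ^ 2 * rho ^ 3 <= K /\ K ^ 2 * rho ^ 3 <= K * rho ^ 2.
Proof.
  pose proof rho_pos; pose proof rho_le_1; pose proof K_rho_le_1.
  split; [|split].
  - replace (K ^ 2 * rho ^ 3) with (K * rho * (K * rho * rho)) by ring.
    apply Rmult_le_contract; [nonneg | lra | nonneg |].
    apply Rmult_le_contract; [nonneg | lra | nonneg | lra].
  - replace (K ^ 2 * rho ^ 3) with (K * rho * (rho ^ 2 * K)) by ring.
    apply Rmult_le_contract; [nonneg | lra | nonneg |].
    apply Rmult_le_contract; [nonneg | | nonneg | lra].
    replace 1 with (1 ^ 2) by ring. apply pow_incr; lra.
  - replace (K ^ 2 * rho ^ 3) with (K * rho * (K * rho ^ 2)) by ring.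
    apply Rmult_le_contract; [nonneg | lra | nonneg | lra].
Qed.

Lemma scalar_decay :
  - (mu * K * U)
  + a1 * rho * (- (gamma * K + beta ^ 2 / gamma) * N + gamma * ku2 - mu * K * P)
  + a2 * (K * rho ^ 2) * (- beta * EE - beta * N + beta * U - mu * K * Q + Y)
  + a3 * (K * rho ^ 3) * (- kB2 + kE2 - beta * Y)
  + c * (K ^ 2 * rho ^ 3)
    * (/ 2 * (N + U + EE + BB) + a1 * rho * P + a2 * (K * rho ^ 2) * Q
       + a3 * (K * rho ^ 3) * S) <= 0.
Proof.
  pose proof scalar_dissipation; pose proof scalar_energy_bounds; pose proof rho_pos.
  destruct decay_weight_le as (HK1 & HK2 & HK3).
  set (Es := / 2 * (N + U + EE + BB) + a1 * rho * P + a2 * (K * rho ^ 2) * Q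
             + a3 * (K * rho ^ 3) * S) in *.
  assert (c * (K ^ 2 * rho ^ 3) * Es <= c * (K ^ 2 * rho ^ 3) * (N + U + EE + BB))
    by (apply Rmult_le_compat_l; [nonneg | lra]).
  assert (c * (K ^ 2 * rho ^ 3) * N <= c * N)
    by (rewrite Rmult_assoc; apply Rmult_le_compat_l; [lra|]; apply Rmult_le_contract; nonneg).
  assert (c * (K ^ 2 * rho ^ 3) * U <= c * K * U)
    by (apply Rmult_le_compat_r; [lra | apply Rmult_le_compat_l; lra]).
  assert (c * (K ^ 2 * rho ^ 3) * EE <= c * (K * rho ^ 2) * EE)
    by (apply Rmult_le_compat_r; [lra | apply Rmult_le_compat_l; lra]).
  lra.
Qed.

End Scalar.

Definition lyapunov (k : R3) (n : C) (u E B : C3) : R :=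
  energy k (a1 / (1 + normR3sq k)) (a2 * normR3sq k / (1 + normR3sq k) ^ 2)
    (a3 * normR3sq k / (1 + normR3sq k) ^ 3) n u E B.

Definition lyapunov_rate (k : R3) (n : C) (u E B : C3) : R :=
  energy_polar k (a1 / (1 + normR3sq k)) (a2 * normR3sq k / (1 + normR3sq k) ^ 2)
    (a3 * normR3sq k / (1 + normR3sq k) ^ 3) n u E B
    (n_rate gamma k u) (u_rate gamma beta mu k n u E) (E_rate beta k u B) (B_rate k E).

Lemma lyapunov_estimates (k : R3) (n : C) (u E B : C3) :
  (Ci * dotRC k E)%C = (- (RtoC (beta / gamma) * n))%C -> (Ci * dotRC k B)%C = 0%C ->
  (/ 4 * normUsq n u E B <= lyapunov k n u E B <= normUsq n u E B) /\
  lyapunov_rate k n u E B + c * normCsq n + c * normR3sq k * normC3sq u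
    + c * (normR3sq k / (1 + normR3sq k) ^ 2) * normC3sq E
    + c * (normR3sq k ^ 2 / (1 + normR3sq k) ^ 3) * normC3sq B <= 0 /\
  lyapunov_rate k n u E B + c * (normR3sq k ^ 2 / (1 + normR3sq k) ^ 3) * lyapunov k n u E B
    <= 0.
Proof.
  intros Hgauss Hsol.
  unfold lyapunov_rate; rewrite energy_polar_rates by (lra || assumption).
  unfold lyapunov, energy, normUsq, Rdiv; rewrite <- !pow_inv.
  pose proof (normR3sq_ge0 k) as HK.
  pose proof (normC3sq_crossRC_solenoidal k B Hsol) as HkB2.
  pose proof (normCsq_dotRC_le k u) as Hku2_le.
  pose proof (normC3sq_crossRC_le k E) as HkE2.
  set (K := normR3sq k) in *.
  set (rho := / (1 + K)).
  assert (Hrho : rho * (1 + K) = 1) by (unfold rho; field; lra).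
  pose proof (normCsq_ge0 n) as HN; pose proof (normC3sq_ge0 u) as HU.
  pose proof (normC3sq_ge0 E) as HEE; pose proof (normC3sq_ge0 B) as HBB.
  pose proof (normCsq_ge0 (dotRC k u)) as Hku2.
  pose proof (innerC_Ci_cauchy_schwarz n (dotRC k u)) as HP.
  pose proof (inner3_cauchy_schwarz u E) as HQ.
  pose proof (inner3_Ci_cauchy_schwarz_r u (crossRC k B)) as HY.
  pose proof (inner3_Ci_cauchy_schwarz_l E (crossRC k B)) as HS.
  pose proof (scalar_energy_bounds K rho HK Hrho _ _ _ _ _ _ _ _ _
                HN HU HEE HBB Hku2_le HP HQ HS HkB2).
  pose proof (scalar_dissipation K rho HK Hrho _ _ _ _ _ _ _ _ _ _ _
                HN HU HEE HBB Hku2 Hku2_le HP HQ HY HS HkB2 HkE2).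
  pose proof (scalar_decay K rho HK Hrho _ _ _ _ _ _ _ _ _ _ _
                HN HU HEE HBB Hku2 Hku2_le HP HQ HY HS HkB2 HkE2).
  split; [|split]; lra.
Qed.
End EnergyInequalities.


(** * Choice of the constants *)

Lemma a3_smallness (a2 beta mu : R) :
  0 < beta -> 0 < mu -> 0 <= a2 -> a2 * beta <= mu / 16 -> a2 <= mu * beta / 64 ->
  a2 <= mu / 16 -> a2 <= / 8 ->
  16 * a2 ^ 2 / mu <= a2 * beta / 4 /\ 16 * a2 ^ 2 / mu * beta ^ 2 <= mu / 16 /\
  16 * a2 ^ 2 / mu <= / 8.
Proof.
  intros Hb Hm Ha2 Ha2_beta Ha2_mubeta Ha2_mu Ha2_small.
  split; [|split]; [apply Rdiv_le_of_le_mul; nra | | apply Rdiv_le_of_le_mul; nra].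
  replace (16 * a2 ^ 2 / mu * beta ^ 2) with (16 * (a2 * beta) ^ 2 / mu) by (field; lra).
  apply Rdiv_le_of_le_mul; [lra|].
  assert (0 <= a2 * beta) by nra.
  replace (mu / 16 * mu) with (16 * (mu / 16) ^ 2) by field.
  apply Rmult_le_compat_l; [lra|]. apply pow_incr; lra.
Qed.

Lemma lyapunov_functional (gamma beta mu : R) :
  0 < gamma -> 0 < beta -> 0 < mu ->
  exists a1 a2 a3 c, 0 < c /\
    forall (k : R3) (n : C) (u E B : C3),
      (Ci * dotRC k E)%C = (- (RtoC (beta / gamma) * n))%C -> (Ci * dotRC k B)%C = 0%C ->
      (/ 4 * normUsq n u E B <= lyapunov a1 a2 a3 k n u E B <= normUsq n u E B) /\
      lyapunov_rate gamma beta mu a1 a2 a3 k n u E B + c * normCsq n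
        + c * normR3sq k * normC3sq u + c * (normR3sq k / (1 + normR3sq k) ^ 2) * normC3sq E
        + c * (normR3sq k ^ 2 / (1 + normR3sq k) ^ 3) * normC3sq B <= 0 /\
      lyapunov_rate gamma beta mu a1 a2 a3 k n u E B
        + c * (normR3sq k ^ 2 / (1 + normR3sq k) ^ 3) * lyapunov a1 a2 a3 k n u E B <= 0.
Proof.
  intros Hg Hb Hm.
  set (m0 := Rmin gamma (beta ^ 2 / gamma)).
  set (a1 := Rmin (Rmin (mu / (16 * gamma)) (m0 / (16 * mu))) (/ 8)).
  set (a2 := Rmin (Rmin (mu / (16 * beta)) (beta / (16 * mu)))
                  (Rmin (mu * beta / 64) (Rmin (mu / 16) (/ 8)))).
  set (a3 := 16 * a2 ^ 2 / mu).
  set (c := Rmin (Rmin (mu / 2) (a1 * m0 / 2)) (Rmin (a2 * beta / 2) (a3 / 2))).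
  assert (Hm0 : 0 < m0)
    by (apply Rmin_glb_lt; [|apply Rdiv_lt_0_compat; [apply pow_lt|]]; lra).
  assert (Ha1 : 0 < a1) by (repeat apply Rmin_glb_lt; try apply Rdiv_lt_0_compat; lra).
  assert (Ha2 : 0 < a2).
  { repeat apply Rmin_glb_lt; try apply Rdiv_lt_0_compat; try apply Rmult_lt_0_compat; lra. }
  assert (Ha3 : 0 < a3).
  { apply Rdiv_lt_0_compat; [apply Rmult_lt_0_compat; [|apply pow_lt]|]; lra. }
  assert (Hc : 0 < c).
  { repeat apply Rmin_glb_lt; apply Rdiv_lt_0_compat; try lra; apply Rmult_lt_0_compat; lra. }
  assert (Ha1_gamma : a1 * gamma <= mu / 16)
    by (apply Rmult_le_of_le_div; [lra | lra | unfold a1; Rmin_le]).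
  assert (Ha1_mu : a1 * mu <= m0 / 16)
    by (apply Rmult_le_of_le_div; [lra | lra | unfold a1; Rmin_le]).
  assert (Ha2_beta : a2 * beta <= mu / 16)
    by (apply Rmult_le_of_le_div; [lra | lra | unfold a2; Rmin_le]).
  assert (Ha2_mu : a2 * mu <= beta / 16)
    by (apply Rmult_le_of_le_div; [lra | lra | unfold a2; Rmin_le]).
  assert (Ha2_a3 : a2 ^ 2 <= a3 * mu / 16) by (right; unfold a3; field; lra).
  destruct (a3_smallness a2 beta mu) as (Ha3_a2 & Ha3_beta & Ha3_small);
    try lra; try (unfold a2; Rmin_le).
  exists a1, a2, a3, c; split; [exact Hc|].
  intros k n u E B; apply (lyapunov_estimates gamma beta mu a1 a2 a3 m0 c);
    first [assumption | lra | unfold m0; Rmin_le | unfold a1; Rmin_le | unfold c; Rmin_le].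
Qed.


Theorem theorem2p1 (gamma beta mu : R) (Hg : 0 < gamma) (Hb : 0 < beta) (Hm : 0 < mu) :
  exists (Ecal : R3 -> C -> C3 -> C3 -> C3 -> R) (c clow cup : R),
    0 < c /\ 0 < clow /\ 0 < cup /\
    forall (k : R3) (n : R -> C) (u E B : R -> C3),
      fourier_solution gamma beta mu k n u E B ->
      forall t : R, 0 <= t ->
        clow * normUsq (n t) (u t) (E t) (B t) <= Ecal k (n t) (u t) (E t) (B t) /\
        Ecal k (n t) (u t) (E t) (B t) <= cup * normUsq (n t) (u t) (E t) (B t) /\
        exists d : R,
          is_derive (fun s => Ecal k (n s) (u s) (E s) (B s)) t d /\
          d + c * normCsq (n t) + c * normR3sq k * normC3sq (u t)
            + c * (normR3sq k / (1 + normR3sq k) ^ 2) * normC3sq (E t)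
            + c * (normR3sq k ^ 2 / (1 + normR3sq k) ^ 3) * normC3sq (B t) <= 0 /\
          d + c * (normR3sq k ^ 2 / (1 + normR3sq k) ^ 3)
                * Ecal k (n t) (u t) (E t) (B t) <= 0.
Proof.
  destruct (lyapunov_functional gamma beta mu Hg Hb Hm) as (a1 & a2 & a3 & c & Hc & Hly).
  exists (lyapunov a1 a2 a3), c, (/ 4), 1.
  split; [exact Hc|]. split; [lra|]. split; [lra|].
  intros k n u E B Hsol t Ht.
  destruct (Hsol t Ht) as (Hn & Hu & HE & HB & Hgauss & Hdiv).
  destruct (Hly k (n t) (u t) (E t) (B t) Hgauss Hdiv) as (Hbounds & Hdiss & Hdecay).
  split; [lra|]. split; [lra|].
  exists (lyapunov_rate gamma beta mu a1 a2 a3 k (n t) (u t) (E t) (B t)).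
  split; [|split; assumption].
  apply is_derive_energy; assumption.
Qed.
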